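(* Let $S\in\{0,1\}^{m\times n}$. Then (1) the identity $I\in\mathbb R^{m\times m}$ is $S$-consistent; (2) for any invertible $S$-consistent $C,C'\in\mathbb R^{m\times m}$, the product $CC'$ is $S$-consistent; (3) for any invertible $S$-consistent $C$, the inverse $C^{-1}$ is $S$-consistent. Hence the set of invertible $S$-consistent $m\times m$ matrices is a group under matrix multiplication.
   Context: $S$-consistency: for $S\in\{0,1\}^{m\times n}$, $C\in\mathbb R^{m\times m}$ is $S$-consistent iff for all $i,j$: $[\mathbb 1-S(\mathbb 1-S)^\top]^+_{i,j}=0\Rightarrow C_{i,j}=0$, where $[\cdot]^+=\max\{0,\cdot\}$ entrywise and $\mathbb 1$ is an all-ones matrix of appropriate size. *)

From mathcomp Require Import all_boot all_order all_algebra.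
From mathcomp Require Import reals.
Set Implicit Arguments. Unset Strict Implicit. Unset Printing Implicit Defensive.
Import Order.TTheory GRing.Theory Num.Theory.
Local Open Scope ring_scope.

(* A 0/1 matrix S ∈ {0,1}^{m×n} is represented as a boolean matrix;
   entries are cast into R via nat_of_bool and %:R. *)

Definition consMx (R : realType) (m n : nat) (S : 'M[bool]_(m, n)) : 'M[R]_(m, m) :=
  const_mx 1 - (map_mx (fun b : bool => (b : nat)%:R) S)
               *m (const_mx 1 - map_mx (fun b : bool => (b : nat)%:R) S)^T.

Definition posPart (R : realType) (m : nat) (A : 'M[R]_(m, m)) : 'M[R]_(m, m) :=
  map_mx (fun x => Num.max 0 x) A.

Definition S_consistent (R : realType) (m n : nat) (S : 'M[bool]_(m, n))
    (C : 'M[R]_(m, m)) : Prop :=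
  forall i j : 'I_m, posPart (consMx R S) i j = 0 -> C i j = 0.

(* [1 - S(1-S)^T]_ij = 1 - #{k | S_ik = 1, S_jk = 0}, so its positive part vanishes
   exactly when row i of S is not contained in row j.  S-consistency thus says that C
   is supported on the preorder "row i of S is contained in row j of S".  Matrices
   supported on a preorder contain the scalars and are closed under sums, scaling and
   products, hence under polynomials; by Cayley-Hamilton the inverse of an invertible
   matrix is a polynomial in it. *)

From mathcomp Require Import all_boot all_order all_algebra.
From mathcomp Require Import reals.
Set Implicit Arguments. Unset Strict Implicit. Unset Printing Implicit Defensive.
Import Order.TTheory GRing.Theory Num.Theory.
Local Open Scope ring_scope.

Definition mx_support_in (R : pzSemiRingType) (m : nat) (r : rel 'I_m)
    (A : 'M[R]_m) : Prop :=
  forall i j, ~~ r i j -> A i j = 0.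

Section SupportIn.
Variables (R : pzSemiRingType) (m : nat) (r : rel 'I_m).
Implicit Types (A B : 'M[R]_m) (a : R).

Lemma support_in0 : mx_support_in r (0 : 'M[R]_m).
Proof. by move=> i j _; rewrite mxE. Qed.

Lemma support_in_scalar a : reflexive r -> mx_support_in r a%:M.
Proof.
by move=> r_refl i j; rewrite mxE; case: eqP => // ->; rewrite r_refl.
Qed.

Lemma support_inD A B :
  mx_support_in r A -> mx_support_in r B -> mx_support_in r (A + B).
Proof. by move=> sA sB i j nr; rewrite mxE sA // sB // addr0. Qed.

Lemma support_inZ a A : mx_support_in r A -> mx_support_in r (a *: A).
Proof. by move=> sA i j nr; rewrite mxE sA // mulr0. Qed.

Lemma support_inM A B : transitive r ->
  mx_support_in r A -> mx_support_in r B -> mx_support_in r (A *m B).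
Proof.
move=> r_trans sA sB i j nr; rewrite mxE big1 // => k _.
have [rik | nrik] := boolP (r i k); last by rewrite sA ?mul0r.
by rewrite sB ?mulr0 //; apply: contra nr; apply: r_trans.
Qed.

End SupportIn.

Lemma support_in_horner_mx (R : comNzRingType) (k : nat) (r : rel 'I_k.+1)
    (A : 'M[R]_k.+1) (p : {poly R}) :
  reflexive r -> transitive r -> mx_support_in r A ->
  mx_support_in r (horner_mx A p).
Proof.
move=> r_refl r_trans sA; elim/poly_ind: p => [|p c IHp].
  by rewrite rmorph0; apply: support_in0.
rewrite rmorphD rmorphM /= horner_mx_X horner_mx_C -mulmxE.
by apply: support_inD; [apply: support_inM | apply: support_in_scalar].
Qed.

(* Cayley-Hamilton: if chi_A = X q + chi_A(0), then q(A) A = - chi_A(0), and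
   chi_A(0) = +-det A is a unit. *)
Lemma invmx_horner_mx (R : comUnitRingType) (k : nat) (A : 'M[R]_k.+1) :
  A \in unitmx -> exists p : {poly R}, invmx A = horner_mx A p.
Proof.
move=> A_unit; set p := char_poly A.
have /factor_theorem [q Dp] : root (p - (p.[0])%:P) 0.
  by rewrite /root hornerD hornerN hornerC subrr.
have qA_A : horner_mx A q *m A = - p.[0] *: 1%:M.
  have := congr1 (horner_mx A) Dp; rewrite polyC0 subr0.
  rewrite rmorphB rmorphM /= Cayley_Hamilton horner_mx_C horner_mx_X.
  by rewrite sub0r mulmxE => <-; rewrite scalemx1 raddfN.
have p0_unit : p.[0] \is a GRing.unit.
  by rewrite horner_coef0 char_poly_det unitrM unitrX ?unitrN1 // -unitmxE.
exists (- (p.[0])^-1 *: q); rewrite linearZ /=.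
have invA_A : (- (p.[0])^-1 *: horner_mx A q) *m A = 1%:M.
  by rewrite -scalemxAl qA_A scalerA mulrN mulNr opprK mulVr // scale1r.
by rewrite -[LHS]mul1mx -invA_A mulmxK.
Qed.

Lemma support_in_invmx (R : comUnitRingType) (m : nat) (r : rel 'I_m)
    (A : 'M[R]_m) :
  reflexive r -> transitive r -> A \in unitmx -> mx_support_in r A ->
  mx_support_in r (invmx A).
Proof.
case: m r A => [r A _ _ _ _ [] //|k r A r_refl r_trans A_unit sA].
have [p ->] := invmx_horner_mx A_unit.
exact: support_in_horner_mx.
Qed.

Definition row_subset (m n : nat) (S : 'M[bool]_(m, n)) : rel 'I_m :=
  fun i j => [forall k, S i k ==> S j k].

Lemma row_subset_refl m n (S : 'M[bool]_(m, n)) : reflexive (row_subset S).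
Proof. by move=> i; apply/forallP => k; apply: implybb. Qed.

Lemma row_subset_trans m n (S : 'M[bool]_(m, n)) : transitive (row_subset S).
Proof.
move=> j i l /forallP ij /forallP jl; apply/forallP => k.
by apply/implyP => /(implyP (ij k)) /(implyP (jl k)).
Qed.

Lemma consMxE (R : realType) m n (S : 'M[bool]_(m, n)) i j :
  consMx R S i j = 1 - (#|[pred k | S i k && ~~ S j k]|)%:R.
Proof.
rewrite /consMx !mxE; congr (_ - _).
rewrite -sum1_card natr_sum [RHS]big_mkcond /=; apply: eq_bigr => k _.
rewrite !mxE /= inE.
by case: (S i k); case: (S j k) => /=; rewrite ?subrr ?mulr0 ?mul0r ?subr0 ?mulr1.
Qed.

Lemma posPart_consMx_eq0 (R : realType) m n (S : 'M[bool]_(m, n)) i j :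
  (posPart (consMx R S) i j == 0) = ~~ row_subset S i j.
Proof.
rewrite /posPart mxE consMxE /row_subset negb_forall.
have [/existsP[k ik_njk] | /existsPn no_k] := boolP [exists k, ~~ (S i k ==> S j k)].
  have : (0 < #|[pred k | S i k && ~~ S j k]|)%N.
    by apply/card_gt0P; exists k; rewrite inE -negb_imply.
  case: #|_| => // c _; apply/eqP/max_idPl.
  by rewrite subr_le0 -natr1 lerDr.
have -> : #|[pred k | S i k && ~~ S j k]| = 0%N.
  by apply/eqP/pred0P => k /=; rewrite -negb_imply; apply/negbTE/no_k.
by rewrite subr0 (max_idPr ler01) oner_eq0.
Qed.

Lemma S_consistentE (R : realType) m n (S : 'M[bool]_(m, n)) (C : 'M[R]_m) :
  S_consistent S C <-> mx_support_in (row_subset S) C.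
Proof.
split=> cC i j.
  by rewrite -(posPart_consMx_eq0 R) => /eqP; apply: cC.
by move=> /eqP; rewrite posPart_consMx_eq0; apply: cC.
Qed.

Theorem mainTheorem5 (R : realType) (m n : nat) (S : 'M[bool]_(m, n)) :
  [/\ S_consistent S (1%:M : 'M[R]_m),
      (forall C C' : 'M[R]_m, C \in unitmx -> C' \in unitmx ->
         S_consistent S C -> S_consistent S C' -> S_consistent S (C *m C'))
    & (forall C : 'M[R]_m, C \in unitmx ->
         S_consistent S C -> S_consistent S (invmx C))].
Proof.
have refl := @row_subset_refl _ _ S; have trans := @row_subset_trans _ _ S.
split.
- by apply/S_consistentE; apply: support_in_scalar.
- move=> C C' _ _ /S_consistentE sC /S_consistentE sC'.
  by apply/S_consistentE; apply: support_inM.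
- move=> C C_unit /S_consistentE sC.
  by apply/S_consistentE; apply: support_in_invmx.
Qed.
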